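(* Let $\Omega\subset\mathbb{R}^2$ be a smooth bounded domain, let $(u_p)_{p>1}$ be a family of sign-changing solutions of $-\Delta u=|u|^{p-1}u$ in $\Omega$, $u=0$ on $\partial\Omega$, with $p\int_\Omega|\nabla u_p|^2dx\to\beta\in\mathbb{R}$, and let $k\in\mathbb{N}\setminus\{0\}$ and families $(x_{i,p})$, $i=1,\dots,k$, be such that (along a sequence $p\to+\infty$) $p|u_p(x_{i,p})|^{p-1}\to+\infty$ and $(\mathcal P_1^k)$, $(\mathcal P_2^k)$, $(\mathcal P_3^k)$ hold, with no family $(x_{k+1,p})$ extending them as described below. Then $$\frac{\operatorname{dist}(x_{i,p},NL_p)}{\mu_{i,p}}\to+\infty\quad\text{as }p\to+\infty,\ \text{for all }i\in\{1,\dots,k\}.$$ As a consequence, for each $i$, letting $\mathcal N_{i,p}\subset\Omega$ be the nodal domain of $u_p$ containing $x_{i,p}$, $u_p^i:=u_p\chi_{\mathcal N_{i,p}}$, and $$z_{i,p}(x):=\frac{p}{u_p(x_{i,p})}\left(u_p^i(x_{i,p}+\mu_{i,p}x)-u_p(x_{i,p})\right),\quad x\in\widetilde{\mathcal N}_{i,p}:=\frac{\mathcal N_{i,p}-x_{i,p}}{\mu_{i,p}},$$ one has $z_{i,p}\to U$ in $C^1_{loc}(\mathbb{R}^2)$.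
   Context: $NL_p:=\{x\in\Omega:u_p(x)=0\}$ is the nodal line; $\chi_A$ is the characteristic function of $A$. $\mu_{i,p}:=(p|u_p(x_{i,p})|^{p-1})^{-1/2}$, $R_{n,p}(x):=\min_{i\le n}|x-x_{i,p}|$, $U(x)=\log\left(\frac{1}{1+\frac18|x|^2}\right)^2$. $(\mathcal P_1^n)$: $|x_{i,p}-x_{j,p}|/\mu_{i,p}\to+\infty$ for $i\ne j$. $(\mathcal P_2^n)$: $v_{i,p}(x):=\frac{p}{u_p(x_{i,p})}(u_p(x_{i,p}+\mu_{i,p}x)-u_p(x_{i,p}))\to U$ in $C^1_{loc}(\mathbb{R}^2)$ for each $i$. $(\mathcal P_3^n)$: $\exists C>0$ with $pR_{n,p}(x)^2|u_p(x)|^{p-1}\le C$ for $p$ large, all $x\in\Omega$. Maximality: for no family $(x_{k+1,p})$ can one extract a further sequence along which $(\mathcal P_1^{k+1}),(\mathcal P_2^{k+1}),(\mathcal P_3^{k+1})$ hold for $(x_{i,p})_{i=1,\dots,k+1}$ (such $k$ and families exist by the preceding proposition of the paper). *)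

From HB Require Import structures.
From mathcomp Require Import all_boot all_order all_algebra.
From mathcomp Require Import all_classical all_reals all_analysis.
Set Implicit Arguments. Unset Strict Implicit. Unset Printing Implicit Defensive.
Import Order.TTheory GRing.Theory Num.Theory.
Import numFieldNormedType.Exports.
Local Open Scope classical_set_scope.
Local Open Scope ring_scope.

Section Defs.
Variable R : realType.
Notation P2 := (R * R)%type.

Definition enorm (y : P2) : R := Num.sqrt (y.1 ^+ 2 + y.2 ^+ 2).
Definition dif (a b : P2) : P2 := (a.1 - b.1, a.2 - b.2).
Definition shift (a : P2) (m : R) (y : P2) : P2 := (a.1 + m * y.1, a.2 + m * y.2).

Definition pd1 (f : P2 -> R) (x : P2) : R := derive1 (fun t => f (t, x.2)) x.1.
Definition pd2 (f : P2 -> R) (x : P2) : R := derive1 (fun t => f (x.1, t)) x.2.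

Fixpoint Ck (n : nat) (A : set P2) (f : P2 -> R) : Prop :=
  match n with
  | O => forall x, A x -> {for x, continuous f}
  | S m => (forall x, A x -> {for x, continuous f}) /\
           (forall x, A x -> derivable (fun t => f (t, x.2)) x.1 1 /\
                             derivable (fun t => f (x.1, t)) x.2 1) /\
           Ck m A (pd1 f) /\ Ck m A (pd2 f)
  end.

Definition smooth (f : P2 -> R) : Prop := forall n, Ck n setT f.

Definition smooth_bounded_domain (O : set P2) : Prop :=
  open O /\ connected O /\ O !=set0 /\
  (exists M : R, forall x, O x -> enorm x <= M) /\
  exists phi : P2 -> R, smooth phi /\
    (forall x, O x <-> phi x < 0) /\
    (forall x, phi x = 0 -> (pd1 phi x, pd2 phi x) != (0, 0)).

Definition laplacian (f : P2 -> R) (x : P2) : R := pd1 (pd1 f) x + pd2 (pd2 f) x.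
Definition grad2 (f : P2 -> R) (x : P2) : R := pd1 f x ^+ 2 + pd2 f x ^+ 2.

Definition solution (O : set P2) (p : R) (u : P2 -> R) : Prop :=
  Ck 2 O u /\ {within closure O, continuous u} /\
  (forall x, closure O x -> ~ O x -> u x = 0) /\
  (forall x, O x -> - laplacian u x = `|u x| `^ (p - 1) * u x).

Definition sign_changing (O : set P2) (u : P2 -> R) : Prop :=
  exists a b, O a /\ O b /\ 0 < u a /\ u b < 0.

Definition dirichlet_energy (O : set P2) (u : P2 -> R) : \bar R :=
  (\int[(@lebesgue_measure R \x @lebesgue_measure R)%E]_(x in O) (grad2 u x)%:E)%E.

Definition eventually (P : nat -> Prop) : Prop := exists N, forall n, (N <= n)%N -> P n.
Definition divergesy (a : nat -> R) : Prop := forall M : R, eventually (fun n => M < a n).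

Definition mu (p : R) (u : P2 -> R) (a : P2) : R := (p * `|u a| `^ (p - 1)) `^ (- (1 / 2)).

Definition Ububble (y : P2) : R := ln ((1 / (1 + enorm y ^+ 2 / 8)) ^+ 2).

Definition C1loc (f : nat -> P2 -> R) (D : nat -> set P2) (g : P2 -> R) : Prop :=
  forall r : R, 0 < r ->
    eventually (fun n => forall y, enorm y <= r -> D n y) /\
    forall eps : R, 0 < eps -> eventually (fun n => forall y, enorm y <= r ->
       `|f n y - g y| < eps /\ `|pd1 (f n) y - pd1 g y| < eps /\
       `|pd2 (f n) y - pd2 g y| < eps).

Definition Rmin (k : nat) (xs : nat -> P2) (y : P2) : R :=
  inf [set d | exists2 i, (i < k)%N & d = enorm (dif y (xs i))].

Definition Prop1 (k : nat) (u : R -> P2 -> R) (p : nat -> R) (x : nat -> nat -> P2) :=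
  forall i j, (i < k)%N -> (j < k)%N -> i <> j ->
    divergesy (fun n => enorm (dif (x i n) (x j n)) / mu (p n) (u (p n)) (x i n)).

Definition blowup (u : R -> P2 -> R) (p : nat -> R) (a : nat -> P2) (n : nat) (y : P2) : R :=
  p n / u (p n) (a n) * (u (p n) (shift (a n) (mu (p n) (u (p n)) (a n)) y) - u (p n) (a n)).

Definition Prop2 (O : set P2) (k : nat) (u : R -> P2 -> R) (p : nat -> R) (x : nat -> nat -> P2) :=
  forall i, (i < k)%N ->
    C1loc (blowup u p (x i))
          (fun n => [set y | O (shift (x i n) (mu (p n) (u (p n)) (x i n)) y)])
          Ububble.

Definition Prop3 (O : set P2) (k : nat) (u : R -> P2 -> R) (p : nat -> R) (x : nat -> nat -> P2) :=
  exists C : R, 0 < C /\ eventually (fun n => forall y, O y ->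
    p n * Rmin k (x ^~ n) y ^+ 2 * `|u (p n) y| `^ (p n - 1) <= C).

Definition Props (O : set P2) (k : nat) (u : R -> P2 -> R) (p : nat -> R) (x : nat -> nat -> P2) :=
  Prop1 k u p x /\ Prop2 O k u p x /\ Prop3 O k u p x.

Definition nodal_line (O : set P2) (f : P2 -> R) : set P2 := [set z | O z /\ f z = 0].
Definition dist_to (a : P2) (S : set P2) : R := inf [set d | exists2 z, S z & d = enorm (dif a z)].

Definition nodal_domain (O : set P2) (f : P2 -> R) (a : P2) : set P2 :=
  connected_component [set z | O z /\ f z != 0] a.

Definition zresc (O : set P2) (u : R -> P2 -> R) (p : nat -> R) (a : nat -> P2) (n : nat) (y : P2) : R :=
  let N := nodal_domain O (u (p n)) (a n) in
  let w := shift (a n) (mu (p n) (u (p n)) (a n)) y in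
  p n / u (p n) (a n) * ((if w \in N then u (p n) w else 0) - u (p n) (a n)).

Definition zdom (O : set P2) (u : R -> P2 -> R) (p : nat -> R) (a : nat -> P2) (n : nat) : set P2 :=
  [set y | nodal_domain O (u (p n)) (a n) (shift (a n) (mu (p n) (u (p n)) (a n)) y)].

End Defs.

(* In the variables rescaled by mu_i around x_i, the blow-up
   v_i = p (u_p - u_p(x_i)) / u_p(x_i) equals -p at every zero of u_p.  Since
   v_i -> U in C^1_loc, U is bounded below on balls and p -> +oo, for every M
   the ball of radius M mu_i around x_i eventually contains no zero of u_p.  The
   nodal line is nonempty because u_p changes sign on the connected domain, so
   dist(x_i, NL_p) / mu_i -> +oo.  Likewise every fixed rescaled square around 0
   eventually lies in the nodal domain of x_i, where z_{i,p} and v_i coincide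
   together with their partial derivatives. *)
From Pilot Require Import Defs.
From HB Require Import structures.
From mathcomp Require Import all_boot all_order all_algebra.
From mathcomp Require Import all_classical all_reals all_analysis.
From mathcomp Require Import lra ring.
Import Order.TTheory GRing.Theory Num.Theory.
Import numFieldNormedType.Exports.
Local Open Scope classical_set_scope.
Local Open Scope ring_scope.

Local Notation eventually := Defs.eventually.
Local Notation shift := Defs.shift.

Lemma eventually_and {P Q : nat -> Prop} :
  eventually P -> eventually Q -> eventually (fun n => P n /\ Q n).
Proof.
move=> [N1 HP] [N2 HQ]; exists (maxn N1 N2) => n hn; split.
  by apply: HP; apply: leq_trans hn; exact: leq_maxl.
by apply: HQ; apply: leq_trans hn; exact: leq_maxr.
Qed.

Lemma eventually_mono {P Q : nat -> Prop} :
  (forall n, P n -> Q n) -> eventually P -> eventually Q.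
Proof. by move=> PQ [N HP]; exists N => n /HP /PQ. Qed.

Section Plane.
Variable R : realType.
Notation P2 := (R * R)%type.

Lemma enorm_ge0 (v : P2) : 0 <= enorm v.
Proof. exact: sqrtr_ge0. Qed.

Lemma enormZ (c : R) (v : P2) : enorm (c * v.1, c * v.2) = `|c| * enorm v.
Proof. by rewrite /enorm /= !exprMn -mulrDr sqrtrM ?sqr_ge0 // sqrtr_sqr. Qed.

Lemma normr1_le_enorm (v : P2) : `|v.1| <= enorm v.
Proof.
by rewrite /enorm -sqrtr_sqr ler_sqrt ?addr_ge0 ?sqr_ge0 // lerDl sqr_ge0.
Qed.

Lemma normr2_le_enorm (v : P2) : `|v.2| <= enorm v.
Proof.
by rewrite /enorm -sqrtr_sqr ler_sqrt ?addr_ge0 ?sqr_ge0 // lerDr sqr_ge0.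
Qed.

Lemma enorm_le_normD (v : P2) : enorm v <= `|v.1| + `|v.2|.
Proof.
rewrite /enorm -(@ger0_norm _ (`|v.1| + `|v.2|)) ?addr_ge0 //.
rewrite -sqrtr_sqr ler_sqrt ?sqr_ge0 //.
rewrite -(real_normK (num_real v.1)) -(real_normK (num_real v.2)) sqrrD.
by have := normr_ge0 v.1; have := normr_ge0 v.2; nra.
Qed.

Lemma enorm_difC (a b : P2) : enorm (dif a b) = enorm (dif b a).
Proof.
by rewrite /enorm /dif /= -(sqrrN (a.1 - b.1)) -(sqrrN (a.2 - b.2)) !opprB.
Qed.

Lemma enorm_dif_shift (a : P2) (m : R) (y : P2) :
  enorm (dif a (shift a m y)) = `|m| * enorm y.
Proof.
have -> : dif a (shift a m y) = (- m * y.1, - m * y.2).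
  by rewrite /dif /shift /=; congr pair; ring.
by rewrite enormZ normrN.
Qed.

Lemma shift_dif (a z : P2) (m : R) : m != 0 ->
  shift a m (m^-1 * (dif z a).1, m^-1 * (dif z a).2) = z.
Proof.
move=> m0; rewrite /shift /dif /= !mulrA mulfV // !mul1r.
by rewrite ![a.1 + _]addrC ![a.2 + _]addrC !subrK -surjective_pairing.
Qed.

Lemma Ububble_ge {M : R} {y : P2} : enorm y <= M ->
  ln ((1 / (1 + M ^+ 2 / 8)) ^+ 2) <= Ububble y.
Proof.
move=> yM; have y0 := enorm_ge0 y.
have den_y : 0 < 1 + enorm y ^+ 2 / 8 by nra.
have den_le : 1 + enorm y ^+ 2 / 8 <= 1 + M ^+ 2 / 8 by nra.
have den_M : 0 < 1 + M ^+ 2 / 8 by lra.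
rewrite /Ububble ler_ln ?posrE ?exprn_gt0 ?div1r ?invr_gt0 //.
by rewrite ler_pXn2r ?nnegrE ?invr_ge0 ?(ltW den_y) ?(ltW den_M) // lef_pV2 ?posrE.
Qed.

Lemma open_setI_gt0 (O : set P2) (f : P2 -> R) : open O ->
  (forall x, O x -> {for x, continuous f}) -> open [set z | O z /\ 0 < f z].
Proof.
move=> oO fc; rewrite openE => z [Oz fz]; rewrite /interior.
near=> w; split; near: w; first by apply: open_nbhs_nbhs.
exact: (cvgr_gt (f z) (fc z Oz) 0 fz).
Unshelve. all: by end_near. Qed.

Lemma open_setI_lt0 (O : set P2) (f : P2 -> R) : open O ->
  (forall x, O x -> {for x, continuous f}) -> open [set z | O z /\ f z < 0].
Proof.
move=> oO fc; rewrite openE => z [Oz fz]; rewrite /interior.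
near=> w; split; near: w; first by apply: open_nbhs_nbhs.
exact: (cvgr_lt (f z) (fc z Oz) 0 fz).
Unshelve. all: by end_near. Qed.

(* Otherwise O would split into the disjoint open sets {f > 0} and {f < 0}. *)
Lemma connected_sign_change_zero (O : set P2) (f : P2 -> R) :
  open O -> connected O -> (forall x, O x -> {for x, continuous f}) ->
  sign_changing O f -> exists z, O z /\ f z = 0.
Proof.
move=> oO cO fc [a [b [Oa [Ob [fa fb]]]]].
apply: contrapT => nozero.
have pos_eq : [set z | O z /\ 0 < f z] = O.
  apply: cO; first by exists a.
    exists [set z | O z /\ 0 < f z]; first exact: open_setI_gt0.
    by apply/seteqP; split => z /= [].
  exists (~` [set z | O z /\ f z < 0]).
    by apply: open_closedC; exact: open_setI_lt0.
  apply/seteqP; split => z /=; first by move=> [Oz fz]; split => // -[_]; lra.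
  move=> [Oz not_neg]; split => //.
  case: (ltgtP (f z) 0) => // fz0; first by case: not_neg.
  by case: nozero; exists z.
have [_ fb_pos] : [set z | O z /\ 0 < f z] b by rewrite pos_eq.
lra.
Qed.

(* The square is the union of the segments from its centre, each of which is
   connected and avoids the zeros of f. *)
Lemma shift_square_sub_nodal_domain (O : set P2) (f : P2 -> R) (a : P2) (m c : R) :
  (forall y : P2, `|y.1| < c -> `|y.2| < c -> O (shift a m y) /\ f (shift a m y) != 0) ->
  forall y : P2, `|y.1| < c -> `|y.2| < c -> nodal_domain O f a (shift a m y).
Proof.
move=> square_ok y y1 y2.
pose seg w := (fun l : R => shift a m (l * w.1, l * w.2)) @` `[0, 1].
pose Q (w : P2) := `|w.1| < c /\ `|w.2| < c.
have seg0 w : shift a m (0 * w.1, 0 * w.2) = a.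
  by rewrite /shift /= !mul0r !mulr0 !addr0 -surjective_pairing.
have zero_in01 : `[0, 1]%classic (0 : R) by rewrite /= in_itv /= lexx ler01.
have one_in01 : `[0, 1]%classic (1 : R) by rewrite /= in_itv /= lexx ler01.
have sub : \bigcup_(w in Q) seg w `<=` [set z | O z /\ f z != 0].
  move=> z [w [w1 w2] [l]]; rewrite /= in_itv /= => /andP[l0 l1] <-.
  apply: square_ok; rewrite /= normrM ger0_norm //.
    by apply: le_lt_trans w1; rewrite ler_piMl.
  by apply: le_lt_trans w2; rewrite ler_piMl.
have conn : connected (\bigcup_(w in Q) seg w).
  apply: bigcup_connected; first by exists a => w _; exists 0.
  move=> w _; apply: connected_continuous_connected; first exact: segment_connected.
  apply: continuous_subspaceT => l; rewrite /shift /=.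
  have affine (b v : R) : (fun t : R => b + m * (t * v)) @ l --> b + m * (l * v).
    apply: cvgD; first exact: cvg_cst.
    by apply: cvgM; [exact: cvg_cst | apply: cvgM; [exact: cvg_id | exact: cvg_cst]].
  exact: (cvg_pair (affine _ _) (affine _ _)).
apply: (connected_component_max _ sub conn); first by exists y => //; exists 0.
by exists y => //; exists 1; rewrite // /shift !mul1r -!surjective_pairing.
Qed.

Lemma mu_gt0 (q : R) (f : P2 -> R) (a : P2) :
  0 < q -> f a != 0 -> 0 < mu q f a.
Proof. by move=> q0 fa; rewrite /mu powR_gt0 // mulr_gt0 // powR_gt0 ?normr_gt0. Qed.

Lemma dist_nodal_line_ge {O : set P2} {f : P2 -> R} {a : P2} {d : R} :
  (exists z, O z /\ f z = 0) ->
  (forall z, f z = 0 -> d <= enorm (dif a z)) ->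
  d <= dist_to a (nodal_line O f).
Proof.
move=> [z0 [Oz0 fz0]] zero_far; apply: lb_le_inf.
  by exists (enorm (dif a z0)); exists z0.
by move=> _ [z [_ fz] ->]; exact: zero_far.
Qed.

(* Partial derivatives only see a neighbourhood, so agreeing on the open square
   of side 2(r + 1) is enough to transfer C^1_loc convergence on the ball of
   radius r. *)
Lemma C1loc_eq_on_squares (f g : nat -> P2 -> R) (D E : nat -> set P2) (U : P2 -> R) :
  (forall r, 0 < r -> eventually (fun n => forall y : P2,
     `|y.1| < r + 1 -> `|y.2| < r + 1 -> E n y /\ f n y = g n y)) ->
  C1loc g D U -> C1loc f E U.
Proof.
move=> agree g_cvg r r0; have [_ g_close] := g_cvg r r0.
have in_square y : enorm y <= r -> `|y.1| < r + 1 /\ `|y.2| < r + 1.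
  by have := normr1_le_enorm y; have := normr2_le_enorm y; lra.
split.
  apply: (eventually_mono _ (agree r r0)) => n fg y /in_square[y1 y2].
  by have [] := fg y y1 y2.
move=> eps eps0.
apply: (eventually_mono _ (eventually_and (agree r r0) (g_close eps eps0))).
move=> n [fg close] y yr; have [y1 y2] := in_square y yr.
have near_eq1 : \forall t \near y.1, f n (t, y.2) = g n (t, y.2).
  apply/nbhs_ballP; exists 1 => //= t; rewrite /ball /= => t1.
  have [] // := fg (t, y.2); have := ler_normB y.1 (y.1 - t); rewrite subKr.
  have := normr1_le_enorm y; lra.
have near_eq2 : \forall t \near y.2, f n (y.1, t) = g n (y.1, t).
  apply/nbhs_ballP; exists 1 => //= t; rewrite /ball /= => t2.
  have [] // := fg (y.1, t); have := ler_normB y.2 (y.2 - t); rewrite subKr.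
  have := normr2_le_enorm y; lra.
have [_ ->] := fg y y1 y2.
have -> : pd1 (f n) y = pd1 (g n) y by rewrite /pd1 !derive1E; exact: near_eq_derive.
have -> : pd2 (f n) y = pd2 (g n) y by rewrite /pd2 !derive1E; exact: near_eq_derive.
exact: close.
Qed.

Section Concentration.
Variables (O : set P2) (u : R -> P2 -> R) (p : nat -> R) (a : nat -> P2).
Hypotheses (p_gt1 : forall n, 1 < p n) (p_div : divergesy p).
Hypothesis conc_div : divergesy (fun n => p n * `|u (p n) (a n)| `^ (p n - 1)).
Hypothesis blowup_cvg :
  C1loc (blowup u p a) (fun n => [set y | O (shift (a n) (mu (p n) (u (p n)) (a n)) y)])
    (@Ububble R).

(* At a zero z of u_p the blow-up equals -p, which is eventually below the
   minimum of U on the ball of radius M. *)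
Lemma blowup_zero_free_ball {M : R} : 0 < M ->
  eventually (fun n => 0 < mu (p n) (u (p n)) (a n) /\
    forall z, u (p n) z = 0 -> M * mu (p n) (u (p n)) (a n) <= enorm (dif (a n) z)).
Proof.
move=> M0.
have [_ close] := blowup_cvg M M0.
have := eventually_and (close 1 ltr01)
  (eventually_and (p_div (1 - ln ((1 / (1 + M ^+ 2 / 8)) ^+ 2))) (conc_div 0)).
apply: eventually_mono => n [near_U [p_big conc_pos]].
have p0 : 0 < p n by apply: lt_trans (p_gt1 n).
have ua0 : u (p n) (a n) != 0.
  apply: contraTneq conc_pos => ->.
  by rewrite normr0 powR0 ?mulr0 ?ltxx // subr_eq0 gt_eqF.
set m := mu _ _ _; have m0 : 0 < m by exact: mu_gt0.
split => // z uz; rewrite leNgt; apply/negP => z_close.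
pose y : P2 := (m^-1 * (dif z (a n)).1, m^-1 * (dif z (a n)).2).
have yM : enorm y <= M.
  rewrite /y enormZ gtr0_norm ?invr_gt0 // -enorm_difC mulrC ler_pdivrMr //.
  exact: ltW.
have [+ _] := near_U y yM.
rewrite /blowup -/m shift_dif ?gt_eqF // uz sub0r mulrN -mulrA mulVf // mulr1.
have := Ububble_ge yM; rewrite ltr_norml => ? /andP[? _]; lra.
Qed.

Lemma dist_nodal_line_div_mu_divergesy :
  (forall n, exists z, O z /\ u (p n) z = 0) ->
  divergesy (fun n => dist_to (a n) (nodal_line O (u (p n))) / mu (p n) (u (p n)) (a n)).
Proof.
move=> has_zero M; have M1_gt0 : 0 < `|M| + 1 by have := normr_ge0 M; lra.
apply: (eventually_mono _ (blowup_zero_free_ball M1_gt0)).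
move=> n [m0 zero_far].
rewrite ltr_pdivlMr //; apply: (lt_le_trans _ (dist_nodal_line_ge (has_zero n) zero_far)).
by rewrite ltr_pM2r //; have := ler_norm M; lra.
Qed.

Lemma nodal_domain_eventually_contains_squares {c : R} : 0 < c ->
  eventually (fun n => forall y : P2, `|y.1| < c -> `|y.2| < c ->
    nodal_domain O (u (p n)) (a n) (shift (a n) (mu (p n) (u (p n)) (a n)) y)).
Proof.
move=> c0; have M_gt0 : 0 < 2 * c + 1 by lra.
have [in_O _] := blowup_cvg (2 * c) (ltac:(lra)).
apply: (eventually_mono _
  (eventually_and (blowup_zero_free_ball M_gt0) in_O)).
move=> n [[m0 zero_far] sq_O]; apply: shift_square_sub_nodal_domain => y y1 y2.
have yc : enorm y < 2 * c by have := enorm_le_normD y; lra.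
split; first exact/sq_O/ltW.
apply/eqP => /zero_far; rewrite enorm_dif_shift gtr0_norm //.
by rewrite mulrC ler_pM2l //; lra.
Qed.

Lemma zresc_C1loc : C1loc (zresc O u p a) (zdom O u p a) (@Ububble R).
Proof.
apply: C1loc_eq_on_squares blowup_cvg => r r0; have r1_gt0 : 0 < r + 1 by lra.
apply: (eventually_mono _ (nodal_domain_eventually_contains_squares r1_gt0)).
move=> n in_domain y y1 y2; have y_in := in_domain y y1 y2.
by split => //; rewrite /zresc /blowup /= (mem_set y_in).
Qed.

End Concentration.

End Plane.

Theorem corollary2p4 (R : realType) (O : set (R * R)) (u : R -> R * R -> R)
  (beta : R) (k : nat) (p : nat -> R) (x : nat -> nat -> R * R) :
  smooth_bounded_domain O ->
  (forall q : R, 1 < q -> solution O q (u q) /\ sign_changing O (u q)) ->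
  (forall eps : R, 0 < eps -> exists q0 : R, forall q : R, q0 < q ->
     (`| (q%:E * dirichlet_energy O (u q)) - beta%:E | < eps%:E)%E) ->
  (0 < k)%N ->
  (forall n, 1 < p n) -> divergesy p ->
  (forall i n, (i < k)%N -> O (x i n)) ->
  (forall i, (i < k)%N -> divergesy (fun n => p n * `|u (p n) (x i n)| `^ (p n - 1))) ->
  Props O k u p x ->
  ~ (exists (y : nat -> R * R) (phi : nat -> nat),
        (forall n, O (y n)) /\ {homo phi : m n / (m < n)%N} /\
        Props O k.+1 u (p \o phi)
          (fun i n => if i == k then y (phi n) else x i (phi n))) ->
  (forall i, (i < k)%N ->
     divergesy (fun n => dist_to (x i n) (nodal_line O (u (p n)))
                         / mu (p n) (u (p n)) (x i n))) /\
  (forall i, (i < k)%N ->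
     C1loc (zresc O u p (x i)) (zdom O u p (x i)) (@Ububble R)).
Proof.
move=> [open_O [connected_O _]] sol _ _ p_gt1 p_div _ conc_div [_ [blowup_cvg _]] _.
have has_zero n : exists z, O z /\ u (p n) z = 0.
  have [[[u_cont _] _] u_sign] := sol _ (p_gt1 n).
  exact: connected_sign_change_zero.
split=> i ik.
  exact: dist_nodal_line_div_mu_divergesy p_gt1 p_div (conc_div i ik) (blowup_cvg i ik) has_zero.
exact: zresc_C1loc p_gt1 p_div (conc_div i ik) (blowup_cvg i ik).
Qed.
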